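(* Let $Q$ be a probability distribution over functions $g:\mathcal X\to\mathbb R$, and fix an integer $k\ge 1$. Let $G=\{g_1,\dots,g_k\}\sim Q^k$ and $G'=\{g'_1,\dots,g'_k\}\sim Q^k$ be independent (each consisting of $k$ i.i.d. draws from $Q$). Define \[ f_1=\arg\min_{f\in V(G)}\mathrm{MSE}(f),\qquad f_2=\arg\min_{f\in V(G')}\mathrm{MSE}(f). \] Then \[ \mathbb E_{f_1,f_2}\big[D(f_1,f_2)\big]\le 4\big(\bar R_k-\bar R_{2k}\big). \]
   Context: $P$ is a probability distribution on $\mathcal X\times\mathcal Y$ with $\mathcal X\subseteq\mathbb R^m$ and $\mathcal Y\subseteq\mathbb R$; unless stated otherwise, expectations are over $(x,y)\sim P$ (or its $x$-marginal), and all functions are assumed square-integrable. For $f:\mathcal X\to\mathbb R$, $\mathrm{MSE}(f)=\mathbb E[(y-f(x))^2]$. The disagreement of two functions is $D(f_1,f_2)=\mathbb E[(f_1(x)-f_2(x))^2]$. For a finite multiset $G$ of functions $\mathcal X\to\mathbb R$, $V(G)$ denotes their linear span and $R(G)=\min_{f\in V(G)}\mathrm{MSE}(f)$. For $t\in\mathbb N$, $\bar R_t=\mathbb E_{\{g_1,\dots,g_t\}\sim Q^t}[R(\{g_1,\dots,g_t\})]$, the expectation over $t$ i.i.d. draws from $Q$. In the conclusion, the outer expectation is over the random draws of $G$ and $G'$. *)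

From HB Require Import structures.
From mathcomp Require Import all_boot all_order all_algebra.
From mathcomp Require Import all_classical all_reals all_analysis.
Set Implicit Arguments. Unset Strict Implicit. Unset Printing Implicit Defensive.
Import Order.TTheory GRing.Theory Num.Theory.
Local Open Scope classical_set_scope.
Local Open Scope ring_scope.

Section Defs.
Context {dX : measure_display} {X : measurableType dX} {R : realType}.

Definition MSE (P : probability (X * R)%type R) (f : X -> R) : \bar R :=
  (\int[P]_z ((z.2 - f z.1) ^+ 2)%:E)%E.

(* D(f1,f2) = E_{x ~ P_X}[(f1 x - f2 x)^2], written as an integral over P
   of a function of the x-coordinate only. *)
Definition Dis (P : probability (X * R)%type R) (f1 f2 : X -> R) : \bar R :=
  (\int[P]_z ((f1 z.1 - f2 z.1) ^+ 2)%:E)%E.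

Definition lspan (G : seq (X -> R)) : set (X -> R) :=
  [set f | exists c : nat -> R,
     f = fun x => \sum_(i < size G) c i * nth (fun=> 0) G i x].

(* R(G) = min_{f in V(G)} MSE(f)  (the minimum is attained; we write it as the infimum) *)
Definition Rmin (P : probability (X * R)%type R) (G : seq (X -> R)) : \bar R :=
  ereal_inf [set MSE P f | f in lspan G].

End Defs.

Section Iter.
Context {dT : measure_display} {Theta : measurableType dT} {R : realType}.

(* Expectation over t i.i.d. draws from Q, i.e. E_{(th_1..th_t) ~ Q^t}[F],
   defined as the iterated (Tonelli) integral
   \int Q(dth_1) ... \int Q(dth_t) F [:: th_1; ...; th_t]. *)
Fixpoint iterE (Q : probability Theta R) (t : nat) (F : seq Theta -> \bar R) : \bar R :=
  match t with
  | 0 => F [::]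
  | t'.+1 => (\int[Q]_th iterE Q t' (fun s => F (th :: s)))%E
  end.
End Iter.

(* \bar R_t = E_{G ~ Q^t}[R(G)], where the random functions are g th, th ~ Q *)
Definition Rbar {dX dT : measure_display} {X : measurableType dX}
  {Theta : measurableType dT} {R : realType}
  (P : probability (X * R)%type R) (Q : probability Theta R)
  (g : Theta -> X -> R) (t : nat) : \bar R :=
  iterE Q t (fun s => Rmin P (map g s)).

(* For a in V(G) and b in V(G'), the midpoint (a + b)/2 lies in V(G ++ G'), and the
   parallelogram identity (a - b)^2 + 4 (y - (a + b)/2)^2 = 2 (y - a)^2 + 2 (y - b)^2
   gives D(a, b) + 4 R(G ++ G') <= 2 MSE(a) + 2 MSE(b).  Taking a = f_1, b = f_2 and
   averaging over the independent draws G, G' gives E D(f_1, f_2) + 4 Rbar_2k <= 4 Rbar_k,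
   because G ++ G' is a draw from Q^2k.
   The averaged quantities, such as s |-> R(map g s), need not be measurable, so the
   averaging only uses what holds for the integral of an arbitrary nonnegative function
   (the supremum of the integrals of the simple functions below it): monotonicity,
   superadditivity, positive homogeneity and, for a probability, int (a + F) <= a + int F. *)

From HB Require Import structures.
From mathcomp Require Import all_boot all_order all_algebra.
From mathcomp Require Import all_classical all_reals all_analysis.
From mathcomp Require Import measurable_realfun.
From mathcomp Require Import ring.
Import Order.TTheory GRing.Theory Num.Theory.
Local Open Scope classical_set_scope.
Local Open Scope ring_scope.

Section ge0_ereal_sup.
Local Open Scope ereal_scope.
Context (R : realType).

Lemma ge0_ereal_supD_le (A B : set (\bar R)) (s : \bar R) : A 0 -> B 0 ->
  (forall a, A a -> 0 <= a) -> (forall b, B b -> 0 <= b) ->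
  (forall a b, A a -> B b -> a + b <= s) -> ereal_sup A + ereal_sup B <= s.
Proof.
move=> A0 B0 A_ge0 B_ge0 AB; case: s AB => [r| |] AB; last 2 first.
- by rewrite leey.
- by have := AB _ _ A0 B0; rewrite adde0.
have B_fin : ereal_sup B \is a fin_num.
  rewrite ge0_fin_numE; last exact: ereal_sup_ubound.
  apply: (@le_lt_trans _ _ r%:E); last exact: ltry.
  by apply: ge_ereal_sup => b Bb; have := AB _ _ A0 Bb; rewrite add0e.
rewrite -leeBrDr //; apply: ge_ereal_sup => a Aa.
have a_fin : a \is a fin_num.
  rewrite ge0_fin_numE ?A_ge0//; apply: (@le_lt_trans _ _ r%:E); last exact: ltry.
  by have := AB _ _ Aa B0; rewrite adde0.
rewrite leeBrDl // -leeBrDr //.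
by apply: ge_ereal_sup => b Bb; rewrite leeBrDl //; exact: AB.
Qed.

End ge0_ereal_sup.

Section ge0_integral_nonmeasurable.
Local Open Scope ereal_scope.
Context d (T : measurableType d) (R : realType).
Implicit Types F G : T -> \bar R.
Import HBNNSimple.

Let sintegralT (mu : {measure set T -> \bar R}) (h : {nnsfun T >-> R}) :
  sintegral mu h = \int[mu]_x (h x)%:E.
Proof. by rewrite integral_nnsfun// patch_setT. Qed.

Section measure.
Variable mu : {measure set T -> \bar R}.

Lemma ge0_le_integralT F G : (forall x, 0 <= F x) -> (forall x, F x <= G x) ->
  \int[mu]_x F x <= \int[mu]_x G x.
Proof.
move=> F0 FG; have G0 x : 0 <= G x by apply: le_trans (FG x).
rewrite !ge0_integralTE//; apply: ereal_sup_le => _ [h hF <-].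
by exists h => //= x; apply: le_trans (hF x) (FG x).
Qed.

Lemma ge0_integralD_ge F G : (forall x, 0 <= F x) -> (forall x, 0 <= G x) ->
  \int[mu]_x F x + \int[mu]_x G x <= \int[mu]_x (F x + G x).
Proof.
move=> F0 G0; rewrite !ge0_integralTE//; last by move=> x; rewrite adde_ge0.
apply: ge0_ereal_supD_le.
- by exists nnsfun0 => //=; exact: sintegral0.
- by exists nnsfun0 => //=; exact: sintegral0.
- by move=> _ [h _ <-]; exact: sintegral_ge0.
- by move=> _ [h _ <-]; exact: sintegral_ge0.
move=> _ _ [h1 h1F <-] [h2 h2G <-]; rewrite -sintegralD.
apply: ereal_sup_ubound; exists (add_nnsfun h1 h2) => //= x.
by rewrite EFinD; apply: leeD.
Qed.

Lemma ge0_integralZl_le F (c : R) : (0 < c)%R -> (forall x, 0 <= F x) ->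
  \int[mu]_x (c%:E * F x) <= c%:E * \int[mu]_x F x.
Proof.
move=> c0 F0; have cF0 x : 0 <= c%:E * F x by rewrite mule_ge0// lee_fin ltW.
rewrite ge0_integralTE//; apply: ge_ereal_sup => _ [h hF <-].
have mh : measurable_fun setT (h : T -> R) by exact: measurable_funP.
have -> : sintegral mu h = \int[mu]_x (c%:E * (h x / c)%:E).
  rewrite sintegralT; apply: eq_integral => x _; rewrite -EFinM.
  by rewrite mulrC divfK// gt_eqF.
rewrite ge0_integralZl//; last 3 first.
- by apply/measurable_EFinP; apply: measurable_funM => //; exact: measurable_cst.
- by move=> x _; rewrite lee_fin divr_ge0// ltW.
- by rewrite lee_fin ltW.
apply: lee_wpmul2l; first by rewrite lee_fin ltW.
apply: ge0_le_integralT => x; first by rewrite lee_fin divr_ge0// ltW.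
have -> : F x = c^-1%:E * (c%:E * F x).
  by rewrite muleA -EFinM mulVf ?gt_eqF// mul1e.
by rewrite mulrC EFinM; apply: lee_wpmul2l; [rewrite lee_fin invr_ge0 ltW|exact: hF].
Qed.

Lemma gt0_integralZl F (c : R) : (0 < c)%R -> (forall x, 0 <= F x) ->
  \int[mu]_x (c%:E * F x) = c%:E * \int[mu]_x F x.
Proof.
move=> c0 F0; apply/le_anti/andP; split; first exact: ge0_integralZl_le.
have cF0 x : 0 <= c%:E * F x by rewrite mule_ge0// lee_fin ltW.
have cK x : F x = c^-1%:E * (c%:E * F x).
  by rewrite muleA -EFinM mulVf ?gt_eqF// mul1e.
rewrite [in leLHS](eq_integral (fun x => c^-1%:E * (c%:E * F x)));
  last by move=> x _; exact: cK.
have c'0 : (0 < c^-1)%R by rewrite invr_gt0.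
apply: (le_trans (lee_wpmul2l _ (ge0_integralZl_le _ _ c'0 cF0))).
  by rewrite lee_fin ltW.
by rewrite muleA -EFinM divff ?gt_eqF// mul1e.
Qed.

End measure.

Lemma ge0_integral_cstD_le (mu : probability T R) F (a : \bar R) : 0 <= a ->
  (forall x, 0 <= F x) -> \int[mu]_x (a + F x) <= a + \int[mu]_x F x.
Proof.
move=> + F0; case: a => [c| |] // c0; last first.
  by rewrite addye ?leey// gt_eqF// (lt_le_trans ltNy0)// integral_ge0.
rewrite lee_fin in c0; rewrite ge0_integralTE; last by move=> x; rewrite adde_ge0.
apply: ge_ereal_sup => _ [h hF <-].
have mh : measurable_fun setT (h : T -> R) by exact: measurable_funP.
have min_max_split x : h x = (Num.min (h x) c + Num.max (h x - c) 0)%R.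
  case: (leP (h x) c) => hc; first by rewrite (max_r _) ?addr0// subr_le0.
  by rewrite (max_l _) ?subr_ge0 ?(ltW hc)// addrC subrK.
have -> : sintegral mu h =
    \int[mu]_x ((Num.min (h x) c)%:E + (Num.max (h x - c) 0)%:E).
  by rewrite sintegralT; apply: eq_integral => x _; rewrite -EFinD -min_max_split.
rewrite ge0_integralD//; last 4 first.
- by move=> x _; rewrite lee_fin le_min c0 andbT fun_ge0.
- by apply/measurable_EFinP; exact: measurable_minr.
- by move=> x _; rewrite lee_fin le_max lexx orbT.
- by apply/measurable_EFinP; apply: measurable_maxr => //; exact: measurable_funB.
apply: leeD.
  apply: (@le_trans _ _ (\int[mu]_x (cst c%:E) x)).
    apply: ge0_le_integralT => x; first by rewrite lee_fin le_min c0 andbT fun_ge0.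
    by rewrite lee_fin ge_min lexx orbT.
  by rewrite integral_cst// -[leRHS]mule1 -(probability_setT mu).
apply: ge0_le_integralT => x; first by rewrite lee_fin le_max lexx orbT.
case: (leP (h x - c)%R 0%R) => hc; first exact: F0.
by rewrite EFinB leeBlDl//; exact: hF.
Qed.

End ge0_integral_nonmeasurable.

Section iterE.
Local Open Scope ereal_scope.
Context {d} {T : measurableType d} {R : realType} (Q : probability T R).
Implicit Types F G : seq T -> \bar R.

Lemma iterE_ge0 t F : (forall s, 0 <= F s) -> 0 <= iterE Q t F.
Proof.
by elim: t F => [|t IH] F F0 //=; apply: integral_ge0 => th _; exact: IH.
Qed.

Lemma le_iterE t F G : (forall s, 0 <= F s) ->
  (forall s, size s = t -> F s <= G s) -> iterE Q t F <= iterE Q t G.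
Proof.
elim: t F G => [|t IH] F G F0 FG /=; first exact: FG.
apply: ge0_le_integralT => th; first exact: iterE_ge0.
by apply: IH => // s st; apply: FG; rewrite /= st.
Qed.

Lemma iterED_ge t F G : (forall s, 0 <= F s) -> (forall s, 0 <= G s) ->
  iterE Q t F + iterE Q t G <= iterE Q t (fun s => F s + G s).
Proof.
elim: t F G => [|t IH] F G F0 G0 //=.
apply: le_trans; first by apply: ge0_integralD_ge => th; exact: iterE_ge0.
apply: ge0_le_integralT => th; first by rewrite adde_ge0 ?iterE_ge0.
exact: IH.
Qed.

Lemma iterE_cstD_le t F (a : \bar R) : 0 <= a -> (forall s, 0 <= F s) ->
  iterE Q t (fun s => a + F s) <= a + iterE Q t F.
Proof.
elim: t F => [|t IH] F a0 F0 //=.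
apply: le_trans; last by apply: ge0_integral_cstD_le => // th; exact: iterE_ge0.
apply: ge0_le_integralT => th; last exact: IH.
by apply: iterE_ge0 => s; rewrite adde_ge0.
Qed.

Lemma gt0_iterEZl t F (c : R) : (0 < c)%R -> (forall s, 0 <= F s) ->
  iterE Q t (fun s => c%:E * F s) = c%:E * iterE Q t F.
Proof.
elim: t F => [|t IH] F c0 F0 //=.
rewrite -gt0_integralZl//; last by move=> th; exact: iterE_ge0.
by apply: eq_integral => th _; exact: IH.
Qed.

Lemma iterE_cst t (x : \bar R) : iterE Q t (fun=> x) = x.
Proof.
elim: t => [|t IH] //=; rewrite IH integral_cst//.
by rewrite -[RHS]mule1 -(probability_setT Q).
Qed.

Lemma iterE_cat a b F :
  iterE Q (a + b) F = iterE Q a (fun s => iterE Q b (fun s' => F (s ++ s'))).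
Proof.
elim: a F => [|a IH] F //=.
by congr integral; apply/funext => th; rewrite IH.
Qed.

End iterE.

Section iterE_pair.
Local Open Scope ereal_scope.
Context {d} {T : measurableType d} {R : realType} (Q : probability T R).

Let pos_iterE2 t (F : seq T -> seq T -> \bar R) : (forall s s', 0 <= F s s') ->
  forall s, 0 <= iterE Q t (F s).
Proof. by move=> F0 s; exact: iterE_ge0. Qed.

Lemma iterE_pairD_le t (A : seq T -> \bar R) (C D : seq T -> seq T -> \bar R) :
  (forall s, 0 <= A s) -> (forall s s', 0 <= C s s') ->
  (forall s s', 0 <= D s s') ->
  (forall s s', size s = t -> size s' = t ->
     D s s' + 4%:E * C s s' <= 2%:E * A s + 2%:E * A s') ->
  iterE Q t (fun s => iterE Q t (D s)) + 4%:E * iterE Q t (fun s => iterE Q t (C s))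
  <= 4%:E * iterE Q t A.
Proof.
move=> A0 C0 D0 DCA.
have -> : 4%:E * iterE Q t (fun s => iterE Q t (C s)) =
    iterE Q t (fun s => iterE Q t (fun s' => 4%:E * C s s')).
  rewrite -gt0_iterEZl//; last exact: pos_iterE2.
  by congr iterE; apply/funext => s; rewrite gt0_iterEZl.
apply: le_trans; first apply: iterED_ge.
- exact: pos_iterE2.
- by apply: pos_iterE2 => s s'; rewrite mule_ge0.
apply: (@le_trans _ _
  (iterE Q t (fun s => iterE Q t (fun s' => 2%:E * A s + 2%:E * A s')))).
  apply: le_iterE => [s|s st] /=.
    by apply: adde_ge0; apply: iterE_ge0 => // s'; rewrite mule_ge0.
  apply: le_trans; first apply: iterED_ge.
  - exact: D0.
  - by move=> s'; rewrite mule_ge0.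
  by apply: le_iterE => [s'|s' s't]; [rewrite adde_ge0 ?mule_ge0|exact: DCA].
apply: (@le_trans _ _ (iterE Q t (fun s => 2%:E * iterE Q t A + 2%:E * A s))).
  apply: le_iterE => [s|s _].
    by apply: iterE_ge0 => s'; rewrite adde_ge0 ?mule_ge0.
  apply: le_trans; first apply: iterE_cstD_le => [|s']; rewrite ?mule_ge0 ?iterE_ge0//.
  by rewrite gt0_iterEZl// addeC.
apply: le_trans; first apply: iterE_cstD_le => [|s]; rewrite ?mule_ge0 ?iterE_ge0//.
by rewrite gt0_iterEZl// -ge0_muleDl ?iterE_ge0// -EFinD -natrD.
Qed.

Lemma iterE_pair_le t (A : seq T -> \bar R) (C D : seq T -> seq T -> \bar R) (M : R) :
  (forall s, 0 <= A s <= M%:E) -> (forall s s', 0 <= C s s') ->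
  (forall s s', 0 <= D s s') ->
  (forall s s', size s = t -> size s' = t ->
     D s s' + 4%:E * C s s' <= 2%:E * A s + 2%:E * A s') ->
  iterE Q t (fun s => iterE Q t (D s)) <=
  4%:E * (iterE Q t A - iterE Q t (fun s => iterE Q t (C s))).
Proof.
move=> A0M C0 D0 DCA.
have A0 s : 0 <= A s by have /andP[] := A0M s.
have := iterE_pairD_le t _ _ _ A0 C0 D0 DCA.
set IA := iterE Q t A; set IC := iterE Q t (fun s => iterE Q t (C s)).
set ID := iterE Q t (fun s => iterE Q t (D s)) => ID_4IC.
have IA_fin : IA \is a fin_num.
  rewrite ge0_fin_numE ?iterE_ge0// (@le_lt_trans _ _ M%:E) ?ltry//.
  rewrite -(iterE_cst Q t M%:E); apply: le_iterE => // s _.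
  by have /andP[] := A0M s.
have IC_fin : IC \is a fin_num.
  have IC0 : 0 <= IC by apply: iterE_ge0; exact: pos_iterE2.
  have ID0 : 0 <= ID by apply: iterE_ge0; exact: pos_iterE2.
  rewrite ge0_fin_numE// (@le_lt_trans _ _ (4%:E * IA)) ?ltey_eq ?fin_numM//.
  apply: le_trans ID_4IC; apply: le_trans (leeDr _ ID0).
  by rewrite lee_pemull// lee_fin ler1n.
rewrite muleBr//; last by rewrite fin_num_adde_defl// fin_numN.
by rewrite leeBrDr// fin_numM.
Qed.

End iterE_pair.

Section least_squares.
Local Open Scope ereal_scope.
Context {dX : measure_display} {X : measurableType dX} {R : realType}.
Variable P : probability (X * R)%type R.
Implicit Types (G : seq (X -> R)) (a b : X -> R).

Lemma lspan_cat_lincomb G G' a b (u v : R) : lspan G a -> lspan G' b ->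
  lspan (G ++ G') (fun x => u * a x + v * b x)%R.
Proof.
move=> [ca ->] [cb ->]; set n := size G.
exists (fun i => if (i < n)%N then u * ca i else v * cb (i - n)%N)%R.
apply/funext => x /=; rewrite size_cat big_split_ord /= !mulr_sumr.
congr (_ + _)%R; apply: eq_bigr => i _.
  by rewrite ltn_ord nth_cat -/n ltn_ord mulrA.
by rewrite ltnNge leq_addr /= nth_cat -/n ltnNge leq_addr /= addKn mulrA.
Qed.

Lemma measurable_lspan G a :
  (forall i, measurable_fun setT (nth (fun=> 0%R) G i)) ->
  lspan G a -> measurable_fun setT a.
Proof.
move=> mG [c ->]; apply: measurable_sum => i.
by apply: measurable_funM => //; exact: measurable_cst.
Qed.

Lemma Rmin_ge0 G : 0 <= Rmin P G.
Proof.
apply: le_ereal_inf_tmp => _ [h _ <-]; apply: integral_ge0 => z _.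
by rewrite lee_fin sqr_ge0.
Qed.

Lemma Rmin_le_MSE0 G : Rmin P G <= MSE P (fun=> 0%R).
Proof.
apply: ereal_inf_lbound; exists (fun=> 0%R) => //.
by exists (fun=> 0%R); apply/funext => x; rewrite big1// => i _; rewrite mul0r.
Qed.

Lemma Dis_ge0 a b : 0 <= Dis P a b.
Proof. by apply: integral_ge0 => z _; rewrite lee_fin sqr_ge0. Qed.

Lemma Dis_add_MSE_midpoint a b : measurable_fun setT a -> measurable_fun setT b ->
  Dis P a b + 4%:E * MSE P (fun x => 2^-1 * a x + 2^-1 * b x)%R =
  2%:E * MSE P a + 2%:E * MSE P b.
Proof.
move=> ma mb; set m := (fun x => 2^-1 * a x + 2^-1 * b x)%R.
have mm : measurable_fun setT m.
  by apply: measurable_funD; apply: measurable_funM => //; exact: measurable_cst.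
have mfst (h : X -> R) :
    measurable_fun setT h -> measurable_fun setT (fun z : X * R => h z.1).
  by move=> mh; exact: (measurableT_comp mh measurable_fst).
have msq (c : R) (u : X * R -> R) : measurable_fun setT u ->
    measurable_fun setT (fun z => c%:E * (u z ^+ 2)%:E).
  move=> mu; apply: emeasurable_funM; first exact: measurable_cst.
  by apply/measurable_EFinP; exact: measurable_funX.
rewrite /Dis /MSE -!gt0_integralZl//; try by move=> z; rewrite lee_fin sqr_ge0.
rewrite -!ge0_integralD//.
- apply: eq_integral => z _; rewrite -!EFinM -!EFinD /m; congr EFin; by field.
all: try by move=> z _; rewrite ?mule_ge0// lee_fin sqr_ge0.
all: try by apply: msq; apply: measurable_funB; [exact: measurable_snd|exact: mfst].
by apply/measurable_EFinP; apply: measurable_funX; apply: measurable_funB; exact: mfst.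
Qed.

Lemma Dis_add_Rmin_cat_le G G' a b :
  (forall i, measurable_fun setT (nth (fun=> 0%R) G i)) ->
  (forall i, measurable_fun setT (nth (fun=> 0%R) G' i)) ->
  lspan G a -> lspan G' b ->
  Dis P a b + 4%:E * Rmin P (G ++ G') <= 2%:E * MSE P a + 2%:E * MSE P b.
Proof.
move=> mG mG' Ga G'b.
rewrite -Dis_add_MSE_midpoint; [|exact: measurable_lspan Ga|exact: measurable_lspan G'b].
apply: leeD2l; apply: lee_wpmul2l => //; apply: ereal_inf_lbound.
by exists (fun x => 2^-1 * a x + 2^-1 * b x)%R => //; exact: lspan_cat_lincomb.
Qed.

End least_squares.

Lemma measurable_nth_map {dX dT : measure_display} {X : measurableType dX}
    {Theta : measurableType dT} {R : realType} (g : Theta -> X -> R) :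
  measurable_fun setT (fun p : Theta * X => g p.1 p.2) ->
  forall s i, measurable_fun setT (nth (fun=> 0%R) (map g s) i).
Proof.
move=> mg s i; elim: s i => [|th s IH] [|i] //=.
exact: (measurableT_comp mg (pair1_measurable th)).
Qed.

Theorem theorem1
  (dX : measure_display) (X : measurableType dX) (R : realType)
  (P : probability (X * R)%type R)
  (dT : measure_display) (Theta : measurableType dT)
  (Q : probability Theta R) (g : Theta -> X -> R)
  (g_meas : measurable_fun setT (fun p : Theta * X => g p.1 p.2))
  (y_sq : (\int[P]_z ((z.2) ^+ 2)%:E < +oo)%E)
  (g_sq : forall th, (\int[P]_z ((g th z.1) ^+ 2)%:E < +oo)%E)
  (k : nat) (hk : (1 <= k)%N)
  (f : seq Theta -> X -> R)
  (f_min : forall s : seq Theta, size s = k ->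
     lspan (map g s) (f s) /\ MSE P (f s) = Rmin P (map g s)) :
  (iterE Q k (fun s => iterE Q k (fun s' => Dis P (f s) (f s')))
   <= 4%:E * (Rbar P Q g k - Rbar P Q g (2 * k)%N))%E.
Proof.
have MSE0_fin : MSE P (fun=> 0%R) \is a fin_num.
  rewrite /MSE (eq_integral (fun z : X * R => (z.2 ^+ 2)%:E)) => [|z _];
    last by rewrite subr0.
  by rewrite ge0_fin_numE// integral_ge0// => z _; rewrite lee_fin sqr_ge0.
rewrite /Rbar mul2n -addnn iterE_cat.
apply: (@iterE_pair_le _ _ _ _ _ _ _ _ (fine (MSE P (fun=> 0%R)))).
- by move=> s; rewrite Rmin_ge0 fineK ?Rmin_le_MSE0.
- by move=> s s'; exact: Rmin_ge0.
- by move=> s s'; exact: Dis_ge0.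
move=> s s' sk s'k; have [Gf <-] := f_min s sk; have [G'f <-] := f_min s' s'k.
by rewrite map_cat; apply: Dis_add_Rmin_cat_le => //; exact: measurable_nth_map.
Qed.
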